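(* Suppose the zero-padding range is chosen so that $X[m,n]=0$ for $m<m_{\min}$ and $m>m_{\max}$ (i.e., $X[m,n]\neq 0$ only for $m_{\min}\le m\le m_{\max}$), where \[ m_{\min}\geq\Big\lceil Q-l_{\min}-1+b_{\max}\big((N-1)M-1\big)\Big\rceil,\qquad m_{\max}\leq\Big\lfloor M-Q-l_{\max}-b_{\max}(N-1)M\Big\rfloor . \] Then the delay-Doppler domain input-output relation simplifies to \[ Y[m,n]=\sum_{l=0}^{l_{\max}^{\prime}}\sum_{k=0}^{N-1}X[m-l,(n-k)_{N}]\,G_{l}(m,k), \] where \[ G_{l}(m,k)=\sum_{i=1}^{P}h_{i}\,e^{j2\pi\frac{k_{i}m}{NM}}\frac{1}{N}\sum_{\dot{n}=0}^{N-1}e^{-j2\pi\frac{\dot{n}(k-k_{i})}{N}}\,a\Big(\big(l-l_{i}+b_{i}(m+\dot{n}M)\big)T_{s}\Big). \]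
   Context: Consider a zero-padded (ZP) wideband ODDM system with $M$ multicarrier symbols and $N$ subcarriers per symbol, sampling period (delay resolution) $T_s$ and $T=MT_s$. Data $X[m,n]$ ($m=0,\dots,M-1$, $n=0,\dots,N-1$) is mapped by the normalized $N$-point IFFT $x[m,\dot n]=\frac{1}{\sqrt N}\sum_{n=0}^{N-1}X[m,n]e^{j2\pi n\dot n/N}$, and the transmit waveform is $s(t)=\sum_{m=0}^{M-1}\sum_{\dot n=0}^{N-1}x[m,\dot n]\,a(t-mT_s-\dot nT)$, where $a(t)$ is a truncated Nyquist pulse for symbol interval $T_s$ with $a(t)=0$ for $|t|\ge QT_s$ and $2Q\ll M$. The channel has $P$ paths; the baseband received signal is $r(t)=\sum_{i=1}^{P}h_i e^{j2\pi\nu_i t}s\big(t-(\tau_i-b_it)\big)$ with complex gain $h_i$, delay $\tau_i=l_iT_s$, Doppler shift at the carrier $\nu_i=\frac{k_i}{NMT_s}$ ($l_i,k_i$ possibly non-integer), and Doppler scaling factor $b_i=\text{v}_i/c$ (path-length decrease speed over wave speed), with $|b_i|\le b_{\max}<1$ and $l_{\min}\le l_i\le l_{\max}$ ($l_{\min},l_{\max}$ integers). The receiver samples $y[m,\dot n]=r(mT_s+\dot nT)$ and computes $Y[m,n]=\frac{1}{\sqrt N}\sum_{\dot n=0}^{N-1}y[m,\dot n]e^{-j2\pi n\dot n/N}$. Synchronization is chosen so that the minimum equivalent delay tap is $0$, namely $l_{\min}=Q+\lfloor b_{\max}(NM-1)\rfloor$, and the maximum equivalent tap $l_{\max}^{\prime}=\lfloor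 l_{\max}+Q+b_{\max}(NM-1)\rfloor$ is assumed to satisfy $l_{\max}^{\prime}<M$. Noise is ignored. $(\cdot)_N$ denotes modulo $N$. *)

From HB Require Import structures.
From mathcomp Require Import all_boot all_order all_algebra.
From mathcomp Require Import reals trigo.
From mathcomp Require Import complex.
Set Implicit Arguments. Unset Strict Implicit. Unset Printing Implicit Defensive.
Import Order.TTheory GRing.Theory Num.Theory.
Local Open Scope ring_scope.

Section ODDM.
Variable R : realType.
Local Notation C := R[i].

Definition expj (th : R) : C := Complex (cos th) (sin th).

Definition rC (x : R) : C := Complex x 0.

Variables (M N : nat) (Ts : R).

Definition Tsym : R := M%:R * Ts.

Definition oddm_x (X : 'M[C]_(M, N)) (m : 'I_M) (nd : 'I_N) : C :=
  rC (Num.sqrt N%:R)^-1 *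
  \sum_(n < N) X m n * expj (2 * pi * (n%:R * nd%:R) / N%:R).

Definition oddm_s (a : R -> C) (X : 'M[C]_(M, N)) (t : R) : C :=
  \sum_(m < M) \sum_(nd < N)
     oddm_x X m nd * a (t - m%:R * Ts - nd%:R * Tsym).

(* received signal r(t) for P paths with gains h, (normalized) delays l,
   (normalized) Doppler k, Doppler scaling b:
   r(t) = sum_i h_i e^{j 2 pi nu_i t} s(t - (tau_i - b_i t)),
   tau_i = l_i Ts, nu_i = k_i / (N M Ts). *)
Definition oddm_r (P : nat) (h : 'I_P -> C) (l k b : 'I_P -> R)
  (a : R -> C) (X : 'M[C]_(M, N)) (t : R) : C :=
  \sum_(i < P) h i * expj (2 * pi * (k i / (N%:R * M%:R * Ts)) * t)
     * oddm_s a X (t - (l i * Ts - b i * t)).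

Definition oddm_y P h l k b a X (m : 'I_M) (nd : 'I_N) : C :=
  @oddm_r P h l k b a X (m%:R * Ts + nd%:R * Tsym).

Definition oddm_Y P h l k b a X (m : 'I_M) (n : 'I_N) : C :=
  rC (Num.sqrt N%:R)^-1 *
  \sum_(nd < N) @oddm_y P h l k b a X m nd
                  * expj (- (2 * pi * (n%:R * nd%:R) / N%:R)).

(* zero extension of the data grid to integer delay indices:
   X[m', n'] = 0 whenever m' is outside {0,..,M-1} (zero padding). *)
Definition Xz (X : 'M[C]_(M, N)) (m : int) (n : nat) : C :=
  match m with
  | Posz m' =>
      match insub m' : option 'I_M, insub n : option 'I_N with
      | Some i, Some j => X i j
      | _, _ => 0
      end
  | Negz _ => 0
  end.

Definition oddm_G (P : nat) (h : 'I_P -> C) (l k b : 'I_P -> R)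
  (a : R -> C) (ll : nat) (m : nat) (kk : nat) : C :=
  \sum_(i < P) h i * expj (2 * pi * (k i * m%:R) / (N%:R * M%:R))
    * (rC (N%:R)^-1 *
       \sum_(nd < N) expj (- (2 * pi * (nd%:R * (kk%:R - k i)) / N%:R))
                     * a ((ll%:R - l i + b i * (m%:R + nd%:R * M%:R)) * Ts)).

End ODDM.

From HB Require Import structures.
From mathcomp Require Import all_boot all_order all_algebra.
From mathcomp Require Import reals trigo.
From mathcomp Require Import complex.
From mathcomp Require Import ring lra zify.
Set Implicit Arguments. Unset Strict Implicit. Unset Printing Implicit Defensive.
Import Order.TTheory GRing.Theory Num.Theory.
Local Open Scope ring_scope.

(** Sampling at t = (m + nd M) Ts, every path contributes pulses
    a((m - m' + (nd - nd') M - l_i + b_i (m + nd M)) Ts).  The guard rows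
    outside [m_min, m_max] keep every pulse of a block nd' <> nd outside the
    support |t| < Q Ts, so each sample only sees its own block; the DFT over nd
    then turns the Doppler phase e^{j 2 pi k_i nd / N} into a cyclic shift of
    the Doppler index, giving Y[m,n] = sum_{m',n'} X[m',n'] G_{m-m'}(m, (n-n')_N).
    By the choice of l_min the pulse also vanishes unless
    0 <= m - m' <= l'_max, which truncates the delay sum. *)

Lemma expjD (R : realType) (x y : R) : expj (x + y) = expj x * expj y.
Proof. by rewrite /expj cosD sinD /=; congr Complex; lra. Qed.

Lemma expjDn2pi (R : realType) (x : R) (c : nat) : expj (x + 2 * pi * c%:R) = expj x.
Proof.
elim: c => [|c IHc]; first by rewrite mulr0 addr0.
have -> : x + 2 * pi * c.+1%:R = (x + 2 * pi * c%:R) + pi *+ 2.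
  by rewrite -natr1 mulr_natr; ring.
by rewrite -[RHS]IHc /expj cosD2pi sinD2pi.
Qed.

Lemma rCM (R : realType) (x y : R) : rC (x * y) = rC x * rC y.
Proof. by rewrite /rC /=; congr Complex; lra. Qed.

Lemma modn_subDK (N n x : nat) : (n < N)%N -> (x < N)%N ->
  ((n + N - x) %% N + x = n + N * (n < x))%N.
Proof.
move=> ltnN ltxN; case: (ltnP n x) => [ltnx | lexn].
  by rewrite modn_small; lia.
have -> : (n + N - x = (n - x) + N)%N by lia.
by rewrite modnDr modn_small; lia.
Qed.

Lemma modn_subK (N n x : nat) : (n < N)%N -> (x < N)%N ->
  ((n + N - (n + N - x) %% N) %% N)%N = x.
Proof.
move=> ltnN ltxN; have := modn_subDK ltnN ltxN; case: (n < x)%N => /= e.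
  have -> : (n + N - (n + N - x) %% N = x)%N by lia.
  exact: modn_small.
have -> : (n + N - (n + N - x) %% N = x + N)%N by lia.
by rewrite modnDr modn_small.
Qed.

Lemma norm_mul_le (R : realDomainType) (b bmax s S : R) :
  `|b| <= bmax -> 0 <= s -> s <= S -> `|b * s| <= bmax * S.
Proof. by move=> leb s_ge0 leS; rewrite normrM (ger0_norm s_ge0) ler_pM. Qed.

Lemma sum_Xz_delay (R : realType) M N (X : 'M[R[i]]_(M, N)) (m : 'I_M) (n' : 'I_N)
    K (g : nat -> R[i]) :
  \sum_(0 <= ll < K) Xz X (m%:Z - ll%:Z) n' * g ll =
  \sum_(m' < M) X m' n' * (if (m' <= m)%N && (m - m' < K)%N then g (m - m')%N else 0).
Proof.
have XzE ll : Xz X (m%:Z - ll%:Z) n' = \sum_(m' < M) (if (m' + ll == m)%N then X m' n' else 0).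
  case: (leqP ll m) => [le_llm | lt_mll].
    have lt_M : (m - ll < M)%N by have := ltn_ord m; lia.
    rewrite subzn // /Xz (insubT (fun j => j < M)%N lt_M) valK.
    rewrite (bigD1 (Ordinal lt_M)) /=; last by apply/eqP; lia.
    rewrite subnK // eqxx big1 ?addr0 // => j ne_j; case: eqP => // e.
    by move/eqP: ne_j; case; apply: val_inj => /=; lia.
  rewrite big1; last by move=> j _; case: eqP => // e; lia.
  have : m%:Z - ll%:Z < 0 by rewrite subr_lt0 ltz_nat.
  by case: (m%:Z - ll%:Z).
under eq_bigr do rewrite XzE mulr_suml.
rewrite exchange_big /=; apply: eq_bigr => j _; rewrite big_mkord.
case: ifP => [/andP[le_jm lt_K] | out].
  rewrite (bigD1 (Ordinal lt_K)) //= subnKC // eqxx big1 ?addr0 // => ll ne_ll.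
  case: eqP; rewrite ?mul0r // => e.
  by move/eqP: ne_ll; case; apply: val_inj => /=; lia.
rewrite mulr0 big1 // => ll _; case: eqP; rewrite ?mul0r // => e.
by move: out; have := ltn_ord ll; rewrite -e leq_addr addKn => ->.
Qed.

Lemma sample_index_le (R : numDomainType) (M N m nd : nat) :
  (m < M)%N -> (nd < N)%N -> m%:R + nd%:R * M%:R <= (N * M)%:R - 1 :> R.
Proof.
move=> ltmM ltndN; rewrite lerBrDr -natrM -natrD natr1 ler_nat.
by have := leq_mul ltndN (leqnn M); nia.
Qed.

Section PulseArguments.
Variables (R : realType) (M N Q : nat) (bmax : R) (lmin lmax mmin mmax : int).
Hypotheses (bmax_ge0 : 0 <= bmax) (bmax_lt1 : bmax < 1).

Section GuardBand.
Hypothesis mmin_ge :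
  Num.ceil (Q%:R - lmin%:~R - 1 + bmax * ((N%:R - 1) * M%:R - 1)) <= mmin.
Hypothesis mmax_le :
  mmax <= Num.floor (M%:R - Q%:R - lmax%:~R - bmax * ((N%:R - 1) * M%:R)).

Lemma prev_block_arg_ge (m m' nd nd' : nat) (li bi : R) :
  (m < M)%N -> (nd < N)%N -> (nd' < nd)%N -> m'%:Z <= mmax ->
  li <= lmax%:~R -> `|bi| <= bmax ->
  Q%:R <= m%:R - m'%:R + (nd%:R - nd'%:R) * M%:R - li + bi * (m%:R + nd%:R * M%:R).
Proof.
move=> ltmM ltndN ltnd'nd le_m'mmax le_li /ler_normlP[le_Nbi _].
have m'_le : m'%:R <= M%:R - Q%:R - lmax%:~R - bmax * ((N%:R - 1) * M%:R) :> R.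
  by rewrite -[m'%:R]/(m'%:Z%:~R) -floor_ge_int (le_trans le_m'mmax).
have ndN : nd%:R + 1 <= N%:R :> R by rewrite natr1 ler_nat.
have gap : 1 <= nd%:R - nd'%:R :> R by rewrite lerBrDr addrC natr1 ler_nat.
have s_ge0 : 0 <= m%:R + nd%:R * M%:R :> R by rewrite addr_ge0 // mulr_ge0.
have b_s : - bmax * (m%:R + nd%:R * M%:R) <= bi * (m%:R + nd%:R * M%:R).
  by rewrite ler_wpM2r // lerNl.
have b_m : bmax * m%:R <= m%:R :> R by rewrite ler_piMl // ltW.
have b_nd : bmax * (nd%:R * M%:R) <= bmax * ((N%:R - 1) * M%:R).
  by rewrite ler_wpM2l // ler_wpM2r //; lra.
have gapM : M%:R <= (nd%:R - nd'%:R) * M%:R :> R by rewrite ler_peMl.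
lra.
Qed.

Lemma next_block_arg_le (m m' nd nd' : nat) (li bi : R) :
  (m < M)%N -> (nd < nd')%N -> (nd' < N)%N -> mmin <= m'%:Z ->
  lmin%:~R <= li -> `|bi| <= bmax ->
  m%:R - m'%:R + (nd%:R - nd'%:R) * M%:R - li + bi * (m%:R + nd%:R * M%:R) <= - Q%:R.
Proof.
move=> ltmM ltndnd' ltnd'N le_mminm' le_li /ler_normlP[_ le_bi].
have m'_ge : Q%:R - lmin%:~R - 1 + bmax * ((N%:R - 1) * M%:R - 1) <= m'%:R :> R.
  by rewrite -[m'%:R]/(m'%:Z%:~R) -ceil_le_int (le_trans mmin_ge).
have mM : m%:R + 1 <= M%:R :> R by rewrite natr1 ler_nat.
have gap : nd%:R + 1 <= nd'%:R :> R by rewrite natr1 ler_nat.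
have nd'N : nd'%:R + 1 <= N%:R :> R by rewrite natr1 ler_nat.
have s_ge0 : 0 <= m%:R + nd%:R * M%:R :> R by rewrite addr_ge0 // mulr_ge0.
have b_s : bi * (m%:R + nd%:R * M%:R) <= bmax * (m%:R + nd%:R * M%:R).
  by rewrite ler_wpM2r.
have ndM : (nd%:R + 1) * M%:R <= (N%:R - 1) * M%:R :> R by rewrite ler_wpM2r //; lra.
have b_sN : bmax * (m%:R + nd%:R * M%:R) <= bmax * ((N%:R - 1) * M%:R - 1).
  by rewrite ler_wpM2l //; lra.
have gapM : (nd%:R - nd'%:R) * M%:R <= -1 * M%:R :> R by rewrite ler_wpM2r //; lra.
lra.
Qed.

Lemma cross_block_arg_bound (m m' nd nd' : nat) (li bi : R) :
  (m < M)%N -> (nd < N)%N -> (nd' < N)%N -> nd' != nd ->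
  mmin <= m'%:Z <= mmax -> lmin%:~R <= li <= lmax%:~R -> `|bi| <= bmax ->
  Q%:R <= `|m%:R - m'%:R + (nd%:R - nd'%:R) * M%:R - li + bi * (m%:R + nd%:R * M%:R)|.
Proof.
move=> ltmM ltndN ltnd'N nd_neq /andP[le_mmin le_mmax] /andP[le_lmin le_lmax] le_bi.
rewrite ler_normr; case: (ltngtP nd' nd) => [lt_nd'nd | lt_ndnd' | eq_nd].
- by rewrite prev_block_arg_ge.
- by rewrite lerNr next_block_arg_le ?orbT.
- by rewrite eq_nd eqxx in nd_neq.
Qed.

End GuardBand.

Hypothesis lmin_def : lmin = Q%:Z + Num.floor (bmax * ((N * M)%:R - 1)).

Lemma tap_arg_bound (d li bs : R) :
  lmin%:~R <= li <= lmax%:~R -> `|bs| <= bmax * ((N * M)%:R - 1) ->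
  d <= -1 \/ (Num.floor (lmax%:~R + Q%:R + bmax * ((N * M)%:R - 1)))%:~R + 1 <= d ->
  Q%:R <= `|d - li + bs|.
Proof.
move=> /andP[le_lmin le_lmax] /ler_normlP[le_Nbs le_bs].
set B := bmax * ((N * M)%:R - 1) in le_Nbs le_bs *.
have lminE : lmin%:~R = Q%:R + (Num.floor B)%:~R :> R by rewrite lmin_def intrD.
have /andP[_ ltB] := floor_itv B.
have /andP[_ ltF] := floor_itv (lmax%:~R + Q%:R + B).
rewrite intrD in ltB ltF.
rewrite ler_normr => -[d_le | d_ge]; apply/orP; [right | left]; lra.
Qed.

End PulseArguments.

Section ODDMSystem.
Variables (R : realType) (M N P Q : nat) (Ts : R) (a : R -> R[i]).
Variables (X : 'M[R[i]]_(M, N)) (h : 'I_P -> R[i]) (l k b : 'I_P -> R).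
Hypotheses (M_gt0 : (0 < M)%N) (N_gt0 : (0 < N)%N) (Ts_gt0 : 0 < Ts).
Hypothesis a_supp : forall t : R, Q%:R * Ts <= `|t| -> a t = 0.

(* The paper's G_l(m, k) with the integer tap l replaced by a real delay d:
   [oddm_G M N Ts h l k b a ll m kk] is [delay_gain ll%:R m kk] by conversion. *)
Definition delay_gain (d : R) (m kk : nat) : R[i] :=
  \sum_(i < P) h i * expj (2 * pi * (k i * m%:R) / (N%:R * M%:R))
    * (rC (N%:R)^-1 *
       \sum_(nd < N) expj (- (2 * pi * (nd%:R * (kk%:R - k i)) / N%:R))
                     * a ((d - l i + b i * (m%:R + nd%:R * M%:R)) * Ts)).

Definition dft_shift (n j : 'I_N) : 'I_N := Ordinal (ltn_pmod (n + N - j) N_gt0).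

Lemma dft_shiftK n : involutive (dft_shift n).
Proof. by move=> j; apply: val_inj; rewrite /= modn_subK. Qed.

Lemma pulse_eq0 (u : R) : Q%:R <= `|u| -> a (u * Ts) = 0.
Proof. by move=> le_u; apply: a_supp; rewrite normrM (gtr0_norm Ts_gt0) ler_pM2r. Qed.

Lemma delay_gain_eq0 (d : R) (m kk : nat) :
  (forall i (nd : 'I_N), Q%:R <= `|d - l i + b i * (m%:R + nd%:R * M%:R)|) ->
  delay_gain d m kk = 0.
Proof.
move=> far; rewrite /delay_gain big1 // => i _.
by rewrite big1 ?mulr0 // => nd _; rewrite pulse_eq0 ?mulr0.
Qed.

Lemma sample_phase (i : 'I_P) (m : 'I_M) (n n' nd : 'I_N) :
  expj (2 * pi * (k i / (N%:R * M%:R * Ts)) * (m%:R * Ts + nd%:R * Tsym M Ts))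
    * expj (2 * pi * (n'%:R * nd%:R) / N%:R) * expj (- (2 * pi * (n%:R * nd%:R) / N%:R))
  = expj (2 * pi * (k i * m%:R) / (N%:R * M%:R))
    * expj (- (2 * pi * (nd%:R * ((dft_shift n n')%:R - k i)) / N%:R)).
Proof.
have shiftE : (dft_shift n n')%:R = n%:R + N%:R * (n < n')%N%:R - n'%:R :> R.
  by rewrite /= -natrM -natrD -(modn_subDK (ltn_ord n) (ltn_ord n')) natrD addrK.
rewrite -!expjD -[RHS](expjDn2pi _ (nd * (n < n'))%N); congr expj.
rewrite shiftE natrM /Tsym; field.
by rewrite !pnatr_eq0 -!lt0n M_gt0 N_gt0 gt_eqF.
Qed.

Section GuardedFrame.
Hypothesis no_interblock : forall (i : 'I_P) (m m' : 'I_M) (nd nd' : 'I_N), nd' != nd ->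
  (forall n', X m' n' = 0) \/
  Q%:R <= `|m%:R - m'%:R + (nd%:R - nd'%:R) * M%:R - l i + b i * (m%:R + nd%:R * M%:R)|.

Lemma oddm_s_sample (i : 'I_P) (m : 'I_M) (nd : 'I_N) :
  oddm_s Ts a X (m%:R * Ts + nd%:R * Tsym M Ts
                 - (l i * Ts - b i * (m%:R * Ts + nd%:R * Tsym M Ts))) =
  \sum_(m' < M) oddm_x X m' nd
                * a ((m%:R - m'%:R - l i + b i * (m%:R + nd%:R * M%:R)) * Ts).
Proof.
apply: eq_bigr => m' _; rewrite (bigD1 nd) //= big1 ?addr0.
  by congr (_ * a _); rewrite /Tsym; ring.
move=> nd' ne_nd'; have [X0 | far] := no_interblock i m m' ne_nd'.
  by rewrite /oddm_x big1 ?mulr0 ?mul0r // => n' _; rewrite X0 mul0r.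
rewrite [X in a X](_ : _ = (m%:R - m'%:R + (nd%:R - nd'%:R) * M%:R - l i
    + b i * (m%:R + nd%:R * M%:R)) * Ts); first by rewrite pulse_eq0 ?mulr0.
by rewrite /Tsym; ring.
Qed.

Lemma oddm_Y_rows (m : 'I_M) (n : 'I_N) :
  oddm_Y Ts h l k b a X m n =
  \sum_(m' < M) \sum_(n' < N) X m' n' * delay_gain (m%:R - m'%:R) m (dft_shift n n').
Proof.
pose c := rC (Num.sqrt (N%:R : R))^-1.
have cc : c * c = rC N%:R^-1 by rewrite -rCM -invfM -expr2 sqr_sqrtr ?ler0n.
pose A i (m' : 'I_M) (nd : 'I_N) :=
  a ((m%:R - m'%:R - l i + b i * (m%:R + nd%:R * M%:R)) * Ts).
pose T (nd : 'I_N) i m' (n' : 'I_N) := c * c * X m' n' * h i *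
  (expj (2 * pi * (k i / (N%:R * M%:R * Ts)) * (m%:R * Ts + nd%:R * Tsym M Ts))
   * expj (2 * pi * (n'%:R * nd%:R) / N%:R) * expj (- (2 * pi * (n%:R * nd%:R) / N%:R)))
  * A i m' nd.
transitivity (\sum_(nd < N) \sum_(i < P) \sum_(m' < M) \sum_(n' < N) T nd i m' n').
  rewrite /oddm_Y /oddm_y /oddm_r.
  under eq_bigr => nd _ do under eq_bigr => i _ do rewrite oddm_s_sample.
  rewrite /oddm_x mulr_sumr; apply: eq_bigr => nd _.
  rewrite mulr_suml mulr_sumr; apply: eq_bigr => i _.
  rewrite mulr_sumr mulr_suml mulr_sumr; apply: eq_bigr => m' _.
  rewrite mulr_sumr mulr_suml mulr_sumr mulr_suml mulr_sumr; apply: eq_bigr => n' _.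
  by rewrite /T /A /c; ring.
transitivity (\sum_(m' < M) \sum_(n' < N) \sum_(i < P) \sum_(nd < N) T nd i m' n').
  rewrite exchange_big /=.
  under eq_bigr => i _ do rewrite exchange_big /=.
  under eq_bigr => i _ do under eq_bigr => m' _ do rewrite exchange_big /=.
  rewrite exchange_big /=.
  by under eq_bigr => m' _ do rewrite exchange_big /=.
apply: eq_bigr => m' _; apply: eq_bigr => n' _.
rewrite /delay_gain mulr_sumr; apply: eq_bigr => i _.
rewrite !mulr_sumr; apply: eq_bigr => nd _.
by rewrite /T sample_phase cc /A; ring.
Qed.

End GuardedFrame.

Lemma oddm_rhs_rows (K : nat) (m : 'I_M) (n : 'I_N) :
  \sum_(0 <= ll < K) \sum_(kk < N)
     Xz X (m%:Z - ll%:Z) ((n + N - kk) %% N) * oddm_G M N Ts h l k b a ll m kk =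
  \sum_(m' < M) \sum_(n' < N) X m' n' *
     (if (m' <= m)%N && (m - m' < K)%N then delay_gain (m - m')%:R m (dft_shift n n')
      else 0).
Proof.
rewrite exchange_big /= (reindex_inj (can_inj (dft_shiftK n))) /=.
under eq_bigr => n' _.
  rewrite modn_subK // (sum_Xz_delay X m n' K (fun ll => delay_gain ll%:R m (dft_shift n n'))).
  over.
by rewrite exchange_big.
Qed.
End ODDMSystem.

Theorem theorem2 (R : realType) (M N Q P : nat) (Ts : R)
  (a : R -> R[i]) (X : 'M[R[i]]_(M, N))
  (h : 'I_P -> R[i]) (l k b : 'I_P -> R)
  (bmax : R) (lmin lmax mmin mmax : int) :
  (0 < M)%N -> (0 < N)%N -> 0 < Ts ->
  (* truncation of the pulse: a(t) = 0 for |t| >= Q Ts *)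
  (forall t : R, Q%:R * Ts <= `|t| -> a t = 0) ->
  (* Doppler scaling factors *)
  0 <= bmax -> bmax < 1 -> (forall i, `|b i| <= bmax) ->
  (* delay range *)
  (forall i, lmin%:~R <= l i <= lmax%:~R) ->
  (* synchronization: minimum equivalent delay tap is 0 *)
  lmin = Q%:Z + Num.floor (bmax * ((N * M)%:R - 1)) ->
  (* maximum equivalent tap l'_max < M *)
  Num.floor (lmax%:~R + Q%:R + bmax * ((N * M)%:R - 1)) < M%:Z ->
  (* zero-padding range *)
  Num.ceil (Q%:R - lmin%:~R - 1 + bmax * ((N%:R - 1) * M%:R - 1)) <= mmin ->
  mmax <= Num.floor (M%:R - Q%:R - lmax%:~R - bmax * ((N%:R - 1) * M%:R)) ->
  (forall (m : 'I_M) (n : 'I_N), ((m%:Z < mmin) || (mmax < m%:Z)) -> X m n = 0) ->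
  forall (m : 'I_M) (n : 'I_N),
    oddm_Y Ts h l k b a X m n =
    \sum_(0 <= ll < `|Num.floor (lmax%:~R + Q%:R + bmax * ((N * M)%:R - 1))|.+1)
      \sum_(kk < N)
        Xz X (m%:Z - ll%:Z) ((n + N - kk) %% N) * oddm_G M N Ts h l k b a ll m kk.
Proof.
move=> M_gt0 N_gt0 Ts_gt0 a_supp bmax_ge0 bmax_lt1 b_le l_range lmin_def _
  mmin_ge mmax_le X_pad m n.
set F := Num.floor _.
have no_interblock (i : 'I_P) (m0 m' : 'I_M) (nd nd' : 'I_N) : nd' != nd ->
    (forall n', X m' n' = 0) \/ Q%:R <= `|m0%:R - m'%:R + (nd%:R - nd'%:R) * M%:R
                                         - l i + b i * (m0%:R + nd%:R * M%:R)|.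
  move=> ne_nd; have [pad | /norP[]] := boolP ((m'%:Z < mmin) || (mmax < m'%:Z)).
    by left => n'; apply: X_pad.
  rewrite -!leNgt => le_mmin le_mmax; right.
  by apply: (cross_block_arg_bound bmax_ge0 bmax_lt1 mmin_ge mmax_le) => //; apply/andP.
rewrite (oddm_Y_rows h k M_gt0 N_gt0 Ts_gt0 a_supp no_interblock) oddm_rhs_rows.
apply: eq_bigr => m' _; apply: eq_bigr => n' _; congr (_ * _).
case: ifP => [/andP[le_m'm _] | out_window]; first by rewrite natrB.
apply: (delay_gain_eq0 h k Ts_gt0 a_supp) => i nd.
apply: (tap_arg_bound lmin_def (l_range i)).
  apply: norm_mul_le (b_le i) _ (sample_index_le _ (ltn_ord m) (ltn_ord nd)).
  by rewrite addr_ge0 // mulr_ge0.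
case: (leqP m' m) => [le_m'm | lt_mm']; [right | left].
  have : ((F + 1)%:~R <= (m - m')%N%:Z%:~R :> R).
    by rewrite ler_int; move: out_window; rewrite le_m'm /=; lia.
  by rewrite intrD -natrB.
have : m%:R + 1 <= m'%:R :> R by rewrite natr1 ler_nat.
lra.
Qed.
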